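(* Let $U$ be an $r$-dimensional subspace of $\mathbb{R}^d$ with $\mu(U)\le\mu_0$, let $\tilde U$ be a subspace of $U$, and let $x_t\in U$. Let $\delta\in(0,1)$ and let $\Omega$ be a list of $m$ indices sampled independently and uniformly with replacement from $[d]$. (i) If $x_t\notin\tilde U$ and $m\ge 32r\mu_0\log^2(2r/\delta)$, then with probability at least $1-4\delta$, $\|x_{t\Omega}-\mathcal{P}_{\tilde U_\Omega}x_{t\Omega}\|_2>0$. (ii) If $x_t\in\tilde U$, then $\|x_{t\Omega}-\mathcal{P}_{\tilde U_\Omega}x_{t\Omega}\|_2=0$ whenever $\tilde U_\Omega^T\tilde U_\Omega$ is invertible.
   Context: For an $r$-dimensional subspace $U\subseteq\mathbb{R}^d$, $\mu(U)=\frac{d}{r}\max_{i\in[d]}\|\mathcal{P}_Ue_i\|_2^2$. For a list $\Omega\in[d]^m$ and $z\in\mathbb{R}^d$, $z_\Omega\in\mathbb{R}^m$ has $j$th entry $z(\Omega(j))$. For a subspace $\tilde U$ with orthonormal basis matrix (also denoted $\tilde U$), $\tilde U_\Omega$ is the matrix whose $j$th row is row $\Omega(j)$ of $\tilde U$, and $\mathcal{P}_{\tilde U_\Omega}$ is the orthogonal projection onto the column span of $\tilde U_\Omega$ (for $\tilde U=\{0\}$ this projection is $0$). *)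

From Stdlib Require Import Reals Lra List ClassicalEpsilon ClassicalDescription.
Open Scope R_scope.

Fixpoint sumR (n : nat) (f : nat -> R) : R :=
  match n with O => 0 | S n' => sumR n' f + f n' end.

(* Vectors of R^n are functions nat -> R (only indices < n matter);
   an n x k matrix is a function row -> column -> R. *)
Definition vec := nat -> R.
Definition mat := nat -> nat -> R.

Definition dot (n : nat) (x y : vec) : R := sumR n (fun i => x i * y i).
Definition norm2 (n : nat) (x : vec) : R := sqrt (dot n x x).
Definition col (A : mat) (j : nat) : vec := fun i => A i j.

Definition in_colspan (n k : nat) (A : mat) (y : vec) : Prop :=
  exists c : vec, forall i, (i < n)%nat -> y i = sumR k (fun j => A i j * c j).

Definition orthonormal_cols (n k : nat) (A : mat) : Prop :=
  forall j1 j2, (j1 < k)%nat -> (j2 < k)%nat ->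
    dot n (col A j1) (col A j2) = if Nat.eq_dec j1 j2 then 1 else 0.

Definition is_proj (n k : nat) (A : mat) (z p : vec) : Prop :=
  in_colspan n k A p /\
  forall j, (j < k)%nat -> dot n (col A j) (fun i => z i - p i) = 0.

(* The orthogonal projection P_{span A} z (exists and is unique on indices < n;
   for k = 0 it is 0). *)
Definition proj (n k : nat) (A : mat) (z : vec) : vec :=
  epsilon (inhabits (fun _ : nat => 0)) (fun p => is_proj n k A z p).

Definition std_basis (i : nat) : vec := fun l => if Nat.eq_dec l i then 1 else 0.

Fixpoint maxR (n : nat) (f : nat -> R) : R :=
  match n with O => 0 | S n' => Rmax (maxR n' f) (f n') end.

(* Coherence mu(U) = d/r * max_i ||P_U e_i||^2, U given by a d x r
   orthonormal basis matrix. *)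
Definition coherence (d r : nat) (U : mat) : R :=
  INR d / INR r * maxR d (fun i => (norm2 d (proj d r U (std_basis i))) ^ 2).

Definition sel (Om : list nat) (z : vec) : vec := fun j => z (nth j Om O).
Definition rows_sel (Om : list nat) (A : mat) : mat := fun j c => A (nth j Om O) c.

Definition gram (m k : nat) (B : mat) : mat := fun a b => dot m (col B a) (col B b).
Definition invertible (k : nat) (G : mat) : Prop :=
  exists H : mat, forall a b, (a < k)%nat -> (b < k)%nat ->
    sumR k (fun c => G a c * H c b) = (if Nat.eq_dec a b then 1 else 0) /\
    sumR k (fun c => H a c * G c b) = (if Nat.eq_dec a b then 1 else 0).

Fixpoint all_lists (d m : nat) : list (list nat) :=
  match m with
  | O => nil :: nil
  | S m' => flat_map (fun l => map (fun i => i :: l) (seq 0 d)) (all_lists d m')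
  end.

(* Probability of event E when Omega is m i.i.d. uniform draws from [d]
   (= uniform distribution on [d]^m). *)
Definition prob (d m : nat) (E : list nat -> Prop) : R :=
  fold_right (fun l acc => (if excluded_middle_informative (E l) then 1 else 0) + acc)
    0 (all_lists d m) / (INR d ^ m).

Definition residual (Om : list nat) (k : nat) (A : mat) (z : vec) : R :=
  let m := length Om in
  norm2 m (fun j => sel Om z j - proj m k (rows_sel Om A) (sel Om z) j).

(* Part (ii) holds for every sample: a vector of span Ut is its own projection.

   For part (i), let K(Omega) be the kernel of U_Omega in R^r. When K(Omega) = 0,
   U_Omega is injective on span U, so a zero residual would put x in span Ut; it
   therefore suffices to bound the probability that dim K(Omega) >= 1. An orthonormal
   basis of a kernel of dimension s carries total mass s over the d rows of U, each
   of squared norm at most mu0 r / d, so a new sample leaves the dimension at s with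
   probability at most 1 - s / (mu0 r). Spending about mu0 r ln(2r/delta) / s samples
   at level s makes the probability of getting stuck there at most delta / (2r), and by
   the harmonic series the total number of samples stays below
   32 r mu0 ln^2(2r/delta). *)

From Stdlib Require Import Reals List Lra Lia Psatz ZArith.
From Stdlib Require Import ClassicalEpsilon ClassicalDescription FunctionalExtensionality.
Open Scope R_scope.

(** * Finite sums and inner products *)

Lemma sumR_ext n f g :
  (forall i, (i < n)%nat -> f i = g i) -> sumR n f = sumR n g.
Proof.
  induction n as [|n IH]; intros H; simpl; [reflexivity|].
  rewrite (H n), IH by (try (intros; apply H); lia); reflexivity.
Qed.

Lemma sumR_le n f g :
  (forall i, (i < n)%nat -> f i <= g i) -> sumR n f <= sumR n g.
Proof.
  induction n as [|n IH]; intros H; simpl; [lra|].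
  apply Rplus_le_compat; [apply IH; intros i Hi|]; apply H; lia.
Qed.

Lemma sumR_plus n f g : sumR n (fun i => f i + g i) = sumR n f + sumR n g.
Proof. induction n as [|n IH]; simpl; [lra|]. rewrite IH; ring. Qed.

Lemma sumR_minus n f g : sumR n (fun i => f i - g i) = sumR n f - sumR n g.
Proof. induction n as [|n IH]; simpl; [lra|]. rewrite IH; ring. Qed.

Lemma sumR_scal_l n c f : sumR n (fun i => c * f i) = c * sumR n f.
Proof. induction n as [|n IH]; simpl; [lra|]. rewrite IH; ring. Qed.

Lemma sumR_const n c : sumR n (fun _ => c) = INR n * c.
Proof. induction n as [|n IH]; simpl sumR; [simpl; ring|]. rewrite IH, S_INR; ring. Qed.

Lemma sumR_zero n : sumR n (fun _ => 0) = 0.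
Proof. rewrite sumR_const; ring. Qed.

Lemma sumR_swap n m f :
  sumR n (fun i => sumR m (fun j => f i j)) = sumR m (fun j => sumR n (fun i => f i j)).
Proof.
  induction n as [|n IH]; simpl; [now rewrite sumR_zero|].
  now rewrite IH, <- sumR_plus.
Qed.

Lemma sumR_nonneg n f : (forall i, (i < n)%nat -> 0 <= f i) -> 0 <= sumR n f.
Proof. intros H. rewrite <- (sumR_zero n). now apply sumR_le. Qed.

Lemma sumR_term_le n f i :
  (forall j, (j < n)%nat -> 0 <= f j) -> (i < n)%nat -> f i <= sumR n f.
Proof.
  induction n as [|n IH]; intros H Hi; [lia|]. simpl.
  assert (0 <= f n) by (apply H; lia).
  assert (0 <= sumR n f) by (apply sumR_nonneg; intros; apply H; lia).
  destruct (Nat.eq_dec i n) as [->|Hne]; [lra|].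
  assert (f i <= sumR n f) by (apply IH; [intros; apply H|]; lia).
  lra.
Qed.

Lemma sumR_sqr_eq_0 n f :
  sumR n (fun i => f i * f i) = 0 -> forall i, (i < n)%nat -> f i = 0.
Proof.
  intros H i Hi.
  assert (f i * f i <= sumR n (fun i => f i * f i))
    by (apply (sumR_term_le n (fun i => f i * f i)); auto; intros; nra).
  nra.
Qed.

Lemma sumR_single n a h :
  (a < n)%nat -> (forall j, (j < n)%nat -> j <> a -> h j = 0) -> sumR n h = h a.
Proof.
  induction n as [|n IH]; intros Ha H; [lia|]. simpl.
  destruct (Nat.eq_dec a n) as [->|Hne].
  - rewrite (sumR_ext n h (fun _ => 0)), sumR_zero by (intros; apply H; lia). ring.
  - rewrite IH, (H n) by (try intros; try apply H; lia). ring.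
Qed.

Lemma sumR_kronecker n a c :
  (a < n)%nat -> sumR n (fun j => c j * (if Nat.eq_dec a j then 1 else 0)) = c a.
Proof.
  intros Ha. rewrite (sumR_single n a); [|exact Ha|].
  - destruct (Nat.eq_dec a a); [ring|contradiction].
  - intros j _ Hj. destruct (Nat.eq_dec a j); [lia|ring].
Qed.

Lemma dot_comm n x y : dot n x y = dot n y x.
Proof. apply sumR_ext; intros; ring. Qed.

Lemma dot_self_nonneg n x : 0 <= dot n x x.
Proof. apply sumR_nonneg; intros; nra. Qed.

Lemma dot_ext n x y x' y' :
  (forall i, (i < n)%nat -> x i = x' i) -> (forall i, (i < n)%nat -> y i = y' i) ->
  dot n x y = dot n x' y'.
Proof. intros Hx Hy. apply sumR_ext; intros. now rewrite Hx, Hy. Qed.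

Lemma dot_minus_r n x y z : dot n x (fun i => y i - z i) = dot n x y - dot n x z.
Proof. unfold dot. rewrite <- sumR_minus. apply sumR_ext; intros; ring. Qed.

Lemma dot_scal_l n c x y : dot n (fun i => c * x i) y = c * dot n x y.
Proof. unfold dot. rewrite <- sumR_scal_l. apply sumR_ext; intros; ring. Qed.

Lemma dot_scal_r n c x y : dot n x (fun i => c * y i) = c * dot n x y.
Proof. unfold dot. rewrite <- sumR_scal_l. apply sumR_ext; intros; ring. Qed.

Lemma dot_minus_self n a p :
  dot n (fun i => a i - p i) (fun i => a i - p i) = dot n a a - 2 * dot n a p + dot n p p.
Proof.
  unfold dot. rewrite <- sumR_scal_l, <- sumR_minus, <- sumR_plus.
  apply sumR_ext; intros; ring.
Qed.

Lemma dot_std_basis_l n i v : (i < n)%nat -> dot n (std_basis i) v = v i.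
Proof.
  intros Hi. unfold dot, std_basis. rewrite (sumR_single n i); [| |intros j _ Hj]; auto.
  - destruct (Nat.eq_dec i i); [ring|contradiction].
  - destruct (Nat.eq_dec j i); [contradiction|ring].
Qed.

Lemma dot_self_eq_0 n x : dot n x x = 0 -> forall i, (i < n)%nat -> x i = 0.
Proof. apply sumR_sqr_eq_0. Qed.

Definition orthonormal (n s : nat) (F : nat -> vec) : Prop :=
  forall t q, (t < s)%nat -> (q < s)%nat ->
    dot n (F t) (F q) = if Nat.eq_dec t q then 1 else 0.

Definition lincomb (s : nat) (c : nat -> R) (F : nat -> vec) : vec :=
  fun i => sumR s (fun t => c t * F t i).

Lemma dot_lincomb_r n s c F v :
  dot n v (lincomb s c F) = sumR s (fun t => c t * dot n v (F t)).
Proof.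
  unfold dot, lincomb.
  rewrite (sumR_ext n _ (fun i => sumR s (fun t => c t * (v i * F t i)))).
  - rewrite sumR_swap. apply sumR_ext; intros. now rewrite <- sumR_scal_l.
  - intros. rewrite <- sumR_scal_l. apply sumR_ext; intros; ring.
Qed.

Lemma dot_lincomb_l n s c F v :
  dot n (lincomb s c F) v = sumR s (fun t => c t * dot n (F t) v).
Proof.
  rewrite dot_comm, dot_lincomb_r. apply sumR_ext; intros. now rewrite dot_comm.
Qed.

Lemma dot_orthonormal_lincomb n s c F q :
  orthonormal n s F -> (q < s)%nat -> dot n (F q) (lincomb s c F) = c q.
Proof.
  intros HF Hq. rewrite dot_lincomb_r.
  rewrite (sumR_ext s _ (fun t => c t * (if Nat.eq_dec q t then 1 else 0))).
  - now apply sumR_kronecker.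
  - intros t Ht. now rewrite HF.
Qed.

Lemma dot_lincomb_orthonormal n s c c' F :
  orthonormal n s F ->
  dot n (lincomb s c F) (lincomb s c' F) = sumR s (fun t => c t * c' t).
Proof.
  intros HF. rewrite dot_lincomb_l. apply sumR_ext; intros t Ht.
  now rewrite dot_orthonormal_lincomb.
Qed.

Lemma sumR_orthonormal_norms n s F :
  orthonormal n s F -> sumR s (fun t => dot n (F t) (F t)) = INR s.
Proof.
  intros HF. rewrite <- (Rmult_1_r (INR s)), <- sumR_const.
  apply sumR_ext; intros t Ht. rewrite HF by exact Ht.
  destruct (Nat.eq_dec t t); [reflexivity|contradiction].
Qed.

Lemma bessel n s F a :
  orthonormal n s F ->
  sumR s (fun t => dot n a (F t) * dot n a (F t)) <= dot n a a.
Proof.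
  intros HF. set (c := fun t => dot n a (F t)).
  pose proof (dot_self_nonneg n (fun i => a i - lincomb s c F i)) as Hres.
  rewrite dot_minus_self, dot_lincomb_orthonormal, dot_lincomb_r in Hres by exact HF.
  unfold c in Hres. lra.
Qed.

Lemma orthonormal_size_le n s F : orthonormal n s F -> (s <= n)%nat.
Proof.
  intros HF. apply INR_le.
  rewrite <- (sumR_orthonormal_norms n s F HF). unfold dot. rewrite sumR_swap.
  rewrite <- (Rmult_1_r (INR n)), <- sumR_const. apply sumR_le; intros i Hi.
  rewrite (sumR_ext s _ (fun t => dot n (std_basis i) (F t) * dot n (std_basis i) (F t)))
    by (intros; now rewrite dot_std_basis_l).
  eapply Rle_trans; [now apply bessel|].
  rewrite dot_std_basis_l by exact Hi. unfold std_basis.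
  destruct (Nat.eq_dec i i); [lra|contradiction].
Qed.

(** * Subspaces, dimension and projections *)

Definition subspace (X : vec -> Prop) : Prop :=
  X (fun _ => 0) /\ forall c a b, X a -> X b -> X (fun i => c * a i + b i).

Section Subspace.
Variable X : vec -> Prop.
Hypothesis HX : subspace X.

Lemma subspace_scal c a : X a -> X (fun i => c * a i).
Proof.
  intros Ha. replace (fun i => c * a i) with (fun i => c * a i + 0)
    by (apply functional_extensionality; intros; ring).
  apply HX; [exact Ha | apply HX].
Qed.

Lemma subspace_minus a b : X a -> X b -> X (fun i => a i - b i).
Proof.
  intros Ha Hb. replace (fun i => a i - b i) with (fun i => -1 * b i + a i)
    by (apply functional_extensionality; intros; ring).
  now apply HX.
Qed.

Lemma subspace_lincomb s c F : (forall t, (t < s)%nat -> X (F t)) -> X (lincomb s c F).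
Proof.
  intros HF. induction s as [|s IH]; [apply HX|].
  replace (lincomb (S s) c F) with (fun i => c s * F s i + lincomb s c F i)
    by (apply functional_extensionality; intros; unfold lincomb; simpl; ring).
  apply HX; [apply HF; lia | apply IH; intros; apply HF; lia].
Qed.

End Subspace.

Definition has_orthonormal_family (n : nat) (X : vec -> Prop) (s : nat) : Prop :=
  exists F, orthonormal n s F /\ forall t, (t < s)%nat -> X (F t).

(* [0] when no [j <= k] satisfies [P]. *)
Fixpoint greatest_upto (P : nat -> Prop) (k : nat) : nat :=
  match k with
  | O => O
  | S k' => if excluded_middle_informative (P k) then k else greatest_upto P k'
  end.

Lemma greatest_upto_spec P k : P O -> P (greatest_upto P k).
Proof. induction k; simpl; auto. now destruct excluded_middle_informative. Qed.

Lemma greatest_upto_max P k j : (j <= k)%nat -> P j -> (j <= greatest_upto P k)%nat.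
Proof.
  induction k as [|k IH]; simpl; intros Hj HP; [lia|].
  destruct excluded_middle_informative as [_|HnP]; [lia|].
  destruct (Nat.eq_dec j (S k)) as [->|]; [contradiction | apply IH; auto; lia].
Qed.

Lemma greatest_upto_le P k : (greatest_upto P k <= k)%nat.
Proof. induction k; simpl; [lia|]. destruct excluded_middle_informative; lia. Qed.

Definition dim (n : nat) (X : vec -> Prop) : nat :=
  greatest_upto (has_orthonormal_family n X) n.

Lemma dim_spec n X : has_orthonormal_family n X (dim n X).
Proof.
  unfold dim. apply greatest_upto_spec.
  exists (fun _ _ => 0). split; [intros t q Ht | intros t Ht]; lia.
Qed.

Lemma dim_max n X s : has_orthonormal_family n X s -> (s <= dim n X)%nat.
Proof.
  intros Hs. unfold dim. apply greatest_upto_max; [|exact Hs].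
  destruct Hs as [F [HF _]]. exact (orthonormal_size_le n s F HF).
Qed.

Lemma dim_le n X : (dim n X <= n)%nat.
Proof. unfold dim. apply greatest_upto_le. Qed.

Lemma orthonormal_extend n s F b :
  orthonormal n s F -> (forall q, (q < s)%nat -> dot n (F q) b = 0) -> 0 < dot n b b ->
  orthonormal n (S s)
    (fun t => if Nat.eq_dec t s then (fun i => / sqrt (dot n b b) * b i) else F t).
Proof.
  intros HF Horth Hb t q Ht Hq.
  pose proof (sqrt_sqrt _ (Rlt_le _ _ Hb)) as Hsq. pose proof (sqrt_lt_R0 _ Hb) as Hpos.
  destruct (Nat.eq_dec t s) as [->|Hts], (Nat.eq_dec q s) as [->|Hqs].
  - destruct (Nat.eq_dec s s); [|contradiction].
    rewrite dot_scal_l, dot_scal_r.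
    set (q := sqrt (dot n b b)) in *. rewrite <- Hsq. field. lra.
  - destruct (Nat.eq_dec s q); [lia|].
    rewrite dot_scal_l, (dot_comm n b (F q)), Horth by lia. ring.
  - destruct (Nat.eq_dec t s); [lia|].
    rewrite dot_scal_r, Horth by lia. ring.
  - apply HF; lia.
Qed.

(* Otherwise the normalized residual of [a] would extend the family. *)
Lemma maximal_orthonormal_spans n X s F a :
  subspace X -> orthonormal n s F -> (forall t, (t < s)%nat -> X (F t)) ->
  (forall j, has_orthonormal_family n X j -> (j <= s)%nat) -> X a ->
  forall i, (i < n)%nat -> a i = lincomb s (fun t => dot n a (F t)) F i.
Proof.
  intros HX HF HFX Hmax Ha.
  set (b := fun i => a i - lincomb s (fun t => dot n a (F t)) F i).
  assert (Hb : X b) by (apply subspace_minus, subspace_lincomb; auto).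
  assert (Horth : forall q, (q < s)%nat -> dot n (F q) b = 0).
  { intros q Hq. unfold b. rewrite dot_minus_r, dot_orthonormal_lincomb, dot_comm by auto.
    ring. }
  destruct (Req_dec (dot n b b) 0) as [Hb0|Hb0].
  - intros i Hi. pose proof (dot_self_eq_0 n b Hb0 i Hi). unfold b in *. lra.
  - exfalso.
    assert (Hext : has_orthonormal_family n X (S s)).
    { eexists. split.
      - apply orthonormal_extend; [exact HF | exact Horth |].
        pose proof (dot_self_nonneg n b). lra.
      - intros t Ht. cbv beta.
        destruct (Nat.eq_dec t s); [now apply subspace_scal | apply HFX; lia]. }
    apply Hmax in Hext. lia.
Qed.

Lemma dim_eq_0 n X a : subspace X -> dim n X = 0%nat -> X a -> forall i, (i < n)%nat -> a i = 0.
Proof.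
  intros HX H0 Ha i Hi.
  rewrite (maximal_orthonormal_spans n X 0 (fun _ _ => 0) a HX); auto.
  - intros t q Ht. lia.
  - intros t Ht. lia.
  - intros j Hj. rewrite <- H0. now apply dim_max.
Qed.

Lemma in_colspan_subspace n k B : subspace (in_colspan n k B).
Proof.
  split.
  - exists (fun _ => 0). intros i Hi.
    rewrite (sumR_ext k _ (fun _ => 0)), sumR_zero by (intros; ring). reflexivity.
  - intros c a b [ca Ha] [cb Hb]. exists (fun j => c * ca j + cb j). intros i Hi.
    rewrite Ha, Hb, <- sumR_scal_l, <- sumR_plus by exact Hi.
    apply sumR_ext; intros; ring.
Qed.

Lemma col_in_colspan n k B j : (j < k)%nat -> in_colspan n k B (col B j).
Proof.
  intros Hj. exists (fun q => if Nat.eq_dec j q then 1 else 0). intros i Hi.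
  now rewrite sumR_kronecker.
Qed.

(* The projection onto [span B] is the expansion in a maximal orthonormal family of [span B]. *)
Lemma proj_spec n k B z : is_proj n k B z (proj n k B z).
Proof.
  unfold proj. apply epsilon_spec.
  set (X := in_colspan n k B).
  destruct (dim_spec n X) as [F [HF HFX]]. set (s := dim n X) in *.
  assert (Hspan : forall a, X a -> forall i, (i < n)%nat ->
                    a i = lincomb s (fun t => dot n a (F t)) F i)
    by (intros; eapply maximal_orthonormal_spans; eauto using in_colspan_subspace, dim_max).
  exists (lincomb s (fun t => dot n z (F t)) F). split.
  - now apply subspace_lincomb; [apply in_colspan_subspace|].
  - intros j Hj.
    rewrite (dot_ext n _ _ (lincomb s (fun t => dot n (col B j) (F t)) F)
               (fun i => z i - lincomb s (fun t => dot n z (F t)) F i))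
      by (intros; try apply Hspan; try apply col_in_colspan; auto).
    rewrite dot_lincomb_l, (sumR_ext s _ (fun _ => 0)), sumR_zero; [reflexivity|].
    intros t Ht. rewrite dot_minus_r, dot_orthonormal_lincomb, (dot_comm n (F t) z) by auto.
    ring.
Qed.

Lemma proj_id n k B z : in_colspan n k B z -> forall i, (i < n)%nat -> proj n k B z i = z i.
Proof.
  intros [cz Hz]. destruct (proj_spec n k B z) as [[cp Hp] Hort].
  set (p := proj n k B z) in *. set (w := fun i => z i - p i).
  assert (Hw : dot n w w = 0).
  { transitivity (sumR n (fun i => sumR k (fun q => (cz q - cp q) * (B i q * w i)))).
    - apply sumR_ext. intros i Hi.
      rewrite (sumR_ext k _ (fun q => w i * (B i q * cz q - B i q * cp q))) by (intros; ring).
      rewrite sumR_scal_l, sumR_minus, <- Hz, <- Hp by exact Hi. unfold w. ring.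
    - rewrite sumR_swap, (sumR_ext k _ (fun _ => 0)), sumR_zero; [reflexivity|].
      intros q Hq. rewrite sumR_scal_l.
      change (sumR n (fun i => B i q * w i)) with (dot n (col B q) w).
      rewrite Hort by exact Hq. ring. }
  intros i Hi. pose proof (dot_self_eq_0 n w Hw i Hi). unfold w in *. lra.
Qed.

(** * Sums over sample lists *)

Definition sum_over (L : list (list nat)) (f : list nat -> R) : R :=
  fold_right (fun l acc => f l + acc) 0 L.

(* [d ^ n * E f(Omega)] for Omega drawn uniformly from [d]^n. *)
Definition lists_sum (d n : nat) (f : list nat -> R) : R := sum_over (all_lists d n) f.

Lemma sum_over_app L1 L2 f : sum_over (L1 ++ L2) f = sum_over L1 f + sum_over L2 f.
Proof.
  induction L1 as [|l L1 IH]; simpl; [lra|].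
  unfold sum_over in *; simpl. rewrite IH; ring.
Qed.

Lemma sum_over_ext L f g : (forall l, f l = g l) -> sum_over L f = sum_over L g.
Proof.
  intros H. induction L as [|l L IH]; [reflexivity|].
  unfold sum_over in *; simpl. now rewrite IH, H.
Qed.

Lemma sum_over_lin L c f h :
  sum_over L (fun l => c * f l + h l) = c * sum_over L f + sum_over L h.
Proof. induction L as [|l L IH]; unfold sum_over in *; simpl; [ring|]. rewrite IH; ring. Qed.

Lemma lists_sum_0 d f : lists_sum d 0 f = f nil.
Proof. unfold lists_sum, sum_over; simpl; ring. Qed.

Lemma lists_sum_S d n f :
  lists_sum d (S n) f = lists_sum d n (fun l => sumR d (fun i => f (i :: l))).
Proof.
  unfold lists_sum. simpl. induction (all_lists d n) as [|l L IH]; [reflexivity|].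
  simpl. rewrite sum_over_app, IH. unfold sum_over at 3; simpl. f_equal.
  clear. induction d as [|d IH]; [reflexivity|].
  rewrite seq_S, map_app, sum_over_app, IH. unfold sum_over; simpl; ring.
Qed.

Lemma lists_sum_ext d n f g : (forall l, f l = g l) -> lists_sum d n f = lists_sum d n g.
Proof. apply sum_over_ext. Qed.

Lemma lists_sum_lin d n c f h :
  lists_sum d n (fun l => c * f l + h l) = c * lists_sum d n f + lists_sum d n h.
Proof. apply sum_over_lin. Qed.

Lemma lists_sum_le d n f g :
  (forall l, Forall (fun i => (i < d)%nat) l -> f l <= g l) -> lists_sum d n f <= lists_sum d n g.
Proof.
  revert f g. induction n as [|n IH]; intros f g H.
  - rewrite !lists_sum_0. apply H. constructor.
  - rewrite !lists_sum_S. apply IH. intros l Hl.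
    apply sumR_le. intros i Hi. apply H. now constructor.
Qed.

Lemma lists_sum_const d n c : lists_sum d n (fun _ => c) = INR d ^ n * c.
Proof.
  revert c. induction n as [|n IH]; intros c.
  - rewrite lists_sum_0. simpl; ring.
  - rewrite lists_sum_S, (lists_sum_ext d n _ (fun _ => INR d * c)), IH
      by (intros; apply sumR_const).
    simpl; ring.
Qed.

Lemma lists_sum_app d a b f :
  lists_sum d (a + b) f = lists_sum d b (fun lb => lists_sum d a (fun la => f (la ++ lb))).
Proof.
  revert f. induction a as [|a IH]; intros f; simpl.
  - apply lists_sum_ext. intros. now rewrite lists_sum_0.
  - rewrite lists_sum_S, IH. apply lists_sum_ext. intros lb. now rewrite lists_sum_S.
Qed.

Definition indicator (P : Prop) : R := if excluded_middle_informative P then 1 else 0.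

Lemma indicator_bounds P : 0 <= indicator P <= 1.
Proof. unfold indicator. destruct excluded_middle_informative; lra. Qed.

Lemma prob_lists_sum d m E : prob d m E = lists_sum d m (fun l => indicator (E l)) / INR d ^ m.
Proof. reflexivity. Qed.

Fixpoint phases_length (b : nat -> nat) (s : nat) : nat :=
  match s with O => O | S s' => (phases_length b s' + b s)%nat end.

Lemma INR_phases_length b s : INR (phases_length b s) = sumR s (fun t => INR (b (S t))).
Proof. induction s as [|s IH]; [reflexivity|]. simpl. now rewrite plus_INR, IH. Qed.

(* A potential [g] on sample lists that never increases when a sample is added;
   at level [s >= 1] at most a fraction [beta s] of the next samples fail to
   lower it. Spending [b s] samples at each level [s], the probability that [g]
   is still positive is at most [sum_s beta s ^ b s]. *)
Section Phases.
Variable d : nat.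
Variable g : list nat -> nat.
Variable beta : nat -> R.
Variable b : nat -> nat.
Hypothesis g_cons_le : forall i l, (g (i :: l) <= g l)%nat.
Hypothesis g_stall : forall l s, (1 <= s)%nat -> g l = s ->
  sumR d (fun i => indicator (s <= g (i :: l))%nat) <= beta s * INR d.
Hypothesis beta_ge0 : forall s, 0 <= beta s.

Lemma g_app_le l l0 : (g (l ++ l0) <= g l0)%nat.
Proof.
  induction l as [|i l IH]; simpl; [lia|].
  specialize (g_cons_le i (l ++ l0)). lia.
Qed.

Lemma stall_bound s l0 k : (1 <= s)%nat -> (g l0 <= s)%nat ->
  lists_sum d k (fun l => indicator (s <= g (l ++ l0))%nat) <= (beta s * INR d) ^ k.
Proof.
  intros Hs Hl0. assert (Hbd : 0 <= beta s * INR d) by (apply Rmult_le_pos; auto; apply pos_INR).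
  induction k as [|k IH].
  - rewrite lists_sum_0. apply indicator_bounds.
  - rewrite lists_sum_S.
    apply Rle_trans with
      (lists_sum d k (fun l => beta s * INR d * indicator (s <= g (l ++ l0))%nat + 0)).
    + apply lists_sum_le. intros l _. unfold indicator at 2.
      destruct excluded_middle_informative as [Hge|Hlt].
      * rewrite Rmult_1_r, Rplus_0_r. apply (g_stall (l ++ l0)); [exact Hs|].
        pose proof (g_app_le l l0). lia.
      * rewrite (sumR_ext d _ (fun _ => 0)), sumR_zero; [lra|].
        intros i _. unfold indicator.
        destruct excluded_middle_informative as [Hge|]; [|reflexivity].
        exfalso. apply Hlt. simpl in Hge. specialize (g_cons_le i (l ++ l0)). lia.
    + rewrite lists_sum_lin, lists_sum_const, Rmult_0_r, Rplus_0_r. simpl.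
      now apply Rmult_le_compat_l.
Qed.

(* Induction on the level: the [b s] samples drawn first either bring [g] below [s],
   and the later ones are handled by induction, or they all stall, see [stall_bound]. *)
Lemma phases_bound s l0 n : (g l0 <= s)%nat -> (phases_length b s <= n)%nat ->
  lists_sum d n (fun l => indicator (1 <= g (l ++ l0))%nat)
  <= INR d ^ n * sumR s (fun t => beta (S t) ^ b (S t)).
Proof.
  revert l0 n. induction s as [|s IH]; intros l0 n Hl0 Hn.
  - rewrite (lists_sum_ext d n _ (fun _ => 0)), lists_sum_const; [simpl; lra|].
    intros l. unfold indicator. destruct excluded_middle_informative; [|reflexivity].
    pose proof (g_app_le l l0). lia.
  - simpl in Hn. set (bs := b (S s)) in *. set (a := (n - bs)%nat).
    replace n with (a + bs)%nat by (unfold a; lia).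
    set (Sg := sumR s (fun t => beta (S t) ^ b (S t))).
    assert (HSg : 0 <= Sg) by (apply sumR_nonneg; intros; apply pow_le; auto).
    assert (Hda : 0 <= INR d ^ a) by (apply pow_le, pos_INR).
    rewrite lists_sum_app.
    apply Rle_trans with
      (lists_sum d bs (fun lb => INR d ^ a * indicator (S s <= g (lb ++ l0))%nat + INR d ^ a * Sg)).
    + apply lists_sum_le. intros lb _. unfold indicator at 2.
      destruct excluded_middle_informative as [Hge|Hlt].
      * apply Rle_trans with (lists_sum d a (fun _ => 1)).
        -- apply lists_sum_le. intros; apply indicator_bounds.
        -- rewrite lists_sum_const. nra.
      * rewrite (lists_sum_ext d a _ (fun la => indicator (1 <= g (la ++ (lb ++ l0)))%nat))
          by (intros; cbv beta; now rewrite app_assoc).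
        rewrite Rmult_0_r, Rplus_0_l. apply IH; lia.
    + rewrite lists_sum_lin, lists_sum_const.
      pose proof (stall_bound (S s) l0 bs ltac:(lia) Hl0) as Hstall.
      rewrite Rpow_mult_distr in Hstall.
      simpl sumR. fold Sg. rewrite pow_add.
      apply Rmult_le_compat_l with (r := INR d ^ a) in Hstall; [|exact Hda].
      unfold bs in *. lra.
Qed.

End Phases.

(** * The kernel of U_Omega *)

Definition row (U : mat) (i : nat) : vec := fun j => U i j.

Definition kernel_rows (r : nat) (U : mat) (Om : list nat) (a : vec) : Prop :=
  forall i, In i Om -> dot r (row U i) a = 0.

Definition kernel_dim (r : nat) (U : mat) (Om : list nat) : nat := dim r (kernel_rows r U Om).

Lemma kernel_rows_subspace r U Om : subspace (kernel_rows r U Om).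
Proof.
  split.
  - intros i _. unfold dot. rewrite (sumR_ext r _ (fun _ => 0)), sumR_zero by (intros; ring).
    reflexivity.
  - intros c a b Ha Hb i Hi. specialize (Ha i Hi). specialize (Hb i Hi).
    unfold dot in *.
    rewrite (sumR_ext r _ (fun j => c * (row U i j * a j) + row U i j * b j)) by (intros; ring).
    rewrite sumR_plus, sumR_scal_l, Ha, Hb. ring.
Qed.

Lemma kernel_rows_cons r U i Om a : kernel_rows r U (i :: Om) a -> kernel_rows r U Om a.
Proof. intros H j Hj. apply H. now right. Qed.

Lemma kernel_dim_cons_le r U i Om : (kernel_dim r U (i :: Om) <= kernel_dim r U Om)%nat.
Proof.
  destruct (dim_spec r (kernel_rows r U (i :: Om))) as [F [HF HFX]].
  apply dim_max. exists F. split; [exact HF|].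
  intros t Ht. eapply kernel_rows_cons, HFX, Ht.
Qed.

(* A maximal orthonormal family of the smaller kernel is maximal in the larger one. *)
Lemma kernel_dim_cons_eq_orth r U i Om a :
  kernel_dim r U (i :: Om) = kernel_dim r U Om -> kernel_rows r U Om a ->
  dot r (row U i) a = 0.
Proof.
  intros Heq Ha.
  destruct (dim_spec r (kernel_rows r U (i :: Om))) as [F [HF HFX]].
  fold (kernel_dim r U (i :: Om)) in HF, HFX. set (s := kernel_dim r U (i :: Om)) in *.
  rewrite (dot_ext r _ _ (row U i) (lincomb s (fun q => dot r a (F q)) F)); [| reflexivity |].
  - rewrite dot_lincomb_r, (sumR_ext s _ (fun _ => 0)), sumR_zero; [reflexivity|].
    intros q Hq. rewrite (HFX q Hq i (or_introl eq_refl)). ring.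
  - apply (maximal_orthonormal_spans r (kernel_rows r U Om)); auto using kernel_rows_subspace.
    + intros q Hq. eapply kernel_rows_cons, HFX, Hq.
    + intros j Hj. rewrite Heq. now apply dim_max.
Qed.

Lemma lincomb_col n U a i : lincomb n a (col U) i = dot n (row U i) a.
Proof. apply sumR_ext; intros; unfold col, row; ring. Qed.

Lemma dot_self_rows d r U a :
  orthonormal d r (col U) ->
  dot r a a = sumR d (fun i => dot r (row U i) a * dot r (row U i) a).
Proof.
  intros HU. transitivity (dot d (lincomb r a (col U)) (lincomb r a (col U))).
  - now rewrite dot_lincomb_orthonormal.
  - apply sumR_ext; intros. now rewrite !lincomb_col.
Qed.

(* An orthonormal basis of the kernel carries total mass [s] over the [d] rows, at most
   [K] per row by Bessel's inequality, and none on rows that keep the dimension. *)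
Lemma kernel_dim_stall_bound d r U K Om s :
  orthonormal d r (col U) -> 0 < K ->
  (forall i, (i < d)%nat -> dot r (row U i) (row U i) <= K) ->
  kernel_dim r U Om = s ->
  sumR d (fun i => indicator (s <= kernel_dim r U (i :: Om))%nat) <= INR d - INR s / K.
Proof.
  intros HU HK Hrow Hs.
  destruct (dim_spec r (kernel_rows r U Om)) as [F [HF HFX]].
  fold (kernel_dim r U Om) in HF, HFX. rewrite Hs in HF, HFX.
  set (stalls := sumR d (fun i => indicator (s <= kernel_dim r U (i :: Om))%nat)).
  assert (Hmass : INR s <= K * (INR d - stalls)).
  { rewrite <- (sumR_orthonormal_norms r s F HF).
    rewrite (sumR_ext s _ _ (fun t _ => dot_self_rows d r U (F t) HU)), sumR_swap.
    rewrite <- (Rmult_1_r (INR d)), <- sumR_const. unfold stalls.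
    rewrite <- sumR_minus, <- sumR_scal_l. apply sumR_le. intros i Hi.
    unfold indicator. destruct excluded_middle_informative as [Hstall|].
    - rewrite (sumR_ext s _ (fun _ => 0)), sumR_zero; [lra|].
      intros t Ht. rewrite (kernel_dim_cons_eq_orth r U i Om (F t)); auto; [ring|].
      pose proof (kernel_dim_cons_le r U i Om). lia.
    - rewrite Rminus_0_r, Rmult_1_r.
      eapply Rle_trans; [apply bessel, HF | now apply Hrow]. }
  apply Rmult_le_compat_r with (r := / K) in Hmass; [|left; now apply Rinv_0_lt_compat].
  replace (K * (INR d - stalls) * / K) with (INR d - stalls) in Hmass by (field; lra).
  unfold Rdiv. lra.
Qed.

(** * The constants *)

Lemma ln_le_compat x y : 0 < x -> x <= y -> ln x <= ln y.
Proof.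
  intros Hx Hxy. destruct (Rle_lt_or_eq_dec _ _ Hxy) as [Hlt| ->]; [|lra].
  left. now apply ln_increasing.
Qed.

Lemma exp_le_compat x y : x <= y -> exp x <= exp y.
Proof.
  intros Hxy. destruct (Rle_lt_or_eq_dec _ _ Hxy) as [Hlt| ->]; [|lra].
  left. now apply exp_increasing.
Qed.

Lemma exp_pow a n : exp a ^ n = exp (a * INR n).
Proof.
  induction n as [|n IH]; simpl pow.
  - now rewrite Rmult_0_r, exp_0.
  - rewrite IH, S_INR, <- exp_plus. f_equal; ring.
Qed.

Lemma ln_INR_nonneg n : (1 <= n)%nat -> 0 <= ln (INR n).
Proof. intros Hn. rewrite <- ln_1. apply ln_le_compat; [lra | apply (le_INR 1 n), Hn]. Qed.

(* From [1 - 1/(n+1) <= exp (-1/(n+1))]. *)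
Lemma ln_succ_ge n : (1 <= n)%nat -> / (INR n + 1) <= ln (INR n + 1) - ln (INR n).
Proof.
  intros Hn. assert (0 < INR n) by (apply lt_0_INR; lia).
  assert (Hq : INR n / (INR n + 1) <= exp (- / (INR n + 1))).
  { pose proof (exp_ineq1_le (- / (INR n + 1))).
    replace (INR n / (INR n + 1)) with (1 + - / (INR n + 1)) by (field; lra). lra. }
  apply ln_le_compat in Hq; [|apply Rdiv_lt_0_compat; lra].
  rewrite ln_exp in Hq. unfold Rdiv in Hq.
  rewrite ln_mult, ln_Rinv in Hq by (try apply Rinv_0_lt_compat; lra). lra.
Qed.

Lemma harmonic_le n : (1 <= n)%nat -> sumR n (fun t => / INR (S t)) <= 1 + ln (INR n).
Proof.
  induction n as [|n IH]; intros Hn; [lia|].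
  destruct (Nat.eq_dec n 0) as [->|Hn0]; [simpl; rewrite ln_1; lra|].
  change (sumR n (fun t => / INR (S t)) + / INR (S n) <= 1 + ln (INR (S n))).
  rewrite S_INR. pose proof (IH ltac:(lia)). pose proof (ln_succ_ge n ltac:(lia)). lra.
Qed.

(* The constants of the argument: [log_term r delta = ln (2r/delta)], and at level [s]
   a phase of about [mu0 r log_term / s] samples, each of which fails to lower the
   level with probability at most [stall_prob mu0 r s]. *)
Definition log_term (r : nat) (delta : R) : R := ln (2 * INR r / delta).

Definition phase_len (mu0 : R) (r : nat) (delta : R) (s : nat) : nat :=
  Z.to_nat (up (mu0 * INR r * log_term r delta / INR s)).

Definition stall_prob (mu0 : R) (r s : nat) : R := Rmax 0 (1 - INR s / (mu0 * INR r)).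

Section Constants.
Variables (r m : nat) (mu0 delta : R).
Hypotheses (Hr : (1 <= r)%nat) (Hdelta : 0 < delta < 1) (Hmu0 : 1 <= mu0).

Let L := log_term r delta.

Lemma log_term_gt : ln 2 + ln (INR r) < L.
Proof.
  assert (0 < INR r) by (apply lt_0_INR; lia).
  unfold L, log_term. rewrite <- ln_mult by lra. apply ln_increasing; [lra|].
  apply Rmult_lt_reg_r with delta; [lra|].
  replace (2 * INR r / delta * delta) with (2 * INR r) by (field; lra). nra.
Qed.

Lemma log_term_pos : 0 < L.
Proof. pose proof log_term_gt. pose proof ln_lt_2. pose proof (ln_INR_nonneg r Hr). lra. Qed.

Lemma phase_len_bounds s : (1 <= s)%nat ->
  mu0 * INR r * L / INR s < INR (phase_len mu0 r delta s) <= mu0 * INR r * L / INR s + 1.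
Proof.
  intros Hs. assert (0 < INR s) by (apply lt_0_INR; lia).
  assert (0 < INR r) by (apply lt_0_INR; lia). pose proof log_term_pos.
  assert (0 < mu0 * INR r * L / INR s)
    by (apply Rdiv_lt_0_compat; [apply Rmult_lt_0_compat; nra | lra]).
  unfold phase_len. fold L. destruct (archimed (mu0 * INR r * L / INR s)) as [Hup1 Hup2].
  rewrite (INR_IZR_INZ (Z.to_nat _)), Z2Nat.id; [lra|]. apply Z.lt_le_incl, lt_0_IZR. lra.
Qed.

(* Summing the phase lengths costs a harmonic factor [1 + ln r <= 2 log_term]. *)
Lemma phases_length_le :
  32 * INR r * mu0 * L ^ 2 <= INR m -> (phases_length (phase_len mu0 r delta) r <= m)%nat.
Proof.
  intros Hm. assert (0 < INR r) by (apply lt_0_INR; lia).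
  pose proof log_term_gt. pose proof log_term_pos. pose proof ln_lt_2.
  pose proof (ln_INR_nonneg r Hr). pose proof (harmonic_le r Hr).
  apply INR_le. rewrite INR_phases_length.
  apply Rle_trans with (sumR r (fun t => mu0 * INR r * L * / INR (S t) + 1)).
  { apply sumR_le. intros t Ht. apply phase_len_bounds. lia. }
  rewrite sumR_plus, sumR_scal_l, sumR_const. eapply Rle_trans; [|exact Hm].
  assert (0 < mu0 * INR r * L) by (apply Rmult_lt_0_compat; nra).
  assert (mu0 * INR r * L * sumR r (fun t => / INR (S t)) <= mu0 * INR r * L * (1 + ln (INR r)))
    by (apply Rmult_le_compat_l; lra).
  assert (mu0 * L * (1 + ln (INR r)) + 1 <= 32 * mu0 * L ^ 2).
  { assert (0 <= mu0 * L * (L - ln (INR r) - 1/2)) by (apply Rmult_le_pos; nra).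
    assert (1/2 < mu0 * L) by nra.
    assert (0 <= mu0 * L * ln (INR r)) by (apply Rmult_le_pos; nra).
    replace (L ^ 2) with (L * L) by ring. nra. }
  nra.
Qed.

(* [(1 - y)^b <= exp (- y b)] and [y b >= log_term]. *)
Lemma stall_prob_pow_le s : (1 <= s)%nat ->
  stall_prob mu0 r s ^ phase_len mu0 r delta s <= delta / (2 * INR r).
Proof.
  intros Hs. assert (0 < INR r) by (apply lt_0_INR; lia).
  assert (0 < INR s) by (apply lt_0_INR; lia).
  pose proof (phase_len_bounds s Hs) as Hb.
  set (y := INR s / (mu0 * INR r)).
  assert (Hy : 0 < y) by (apply Rdiv_lt_0_compat; nra).
  apply Rle_trans with (exp (- y) ^ phase_len mu0 r delta s).
  { apply pow_incr. split; [apply Rmax_l|]. apply Rmax_lub; [left; apply exp_pos|].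
    pose proof (exp_ineq1_le (- y)). unfold y in *. lra. }
  rewrite exp_pow.
  replace (delta / (2 * INR r)) with (exp (- L))
    by (unfold L, log_term; rewrite exp_Ropp, exp_ln by (apply Rdiv_lt_0_compat; lra);
        field; lra).
  apply exp_le_compat.
  assert (L <= y * INR (phase_len mu0 r delta s)).
  { apply Rle_trans with (y * (mu0 * INR r * L / INR s)).
    - right. unfold y. field. split; lra.
    - apply Rmult_le_compat_l; lra. }
  lra.
Qed.

Lemma sum_stall_probs_le :
  sumR r (fun t => stall_prob mu0 r (S t) ^ phase_len mu0 r delta (S t)) <= delta / 2.
Proof.
  assert (0 < INR r) by (apply lt_0_INR; lia).
  apply Rle_trans with (sumR r (fun _ => delta / (2 * INR r))).
  - apply sumR_le. intros t _. apply stall_prob_pow_le. lia.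
  - rewrite sumR_const. right. field. lra.
Qed.

End Constants.

(** * Coherence, residuals and the theorem *)

Lemma maxR_ge n f i : (i < n)%nat -> f i <= maxR n f.
Proof.
  induction n as [|n IH]; intros Hi; [lia|]. simpl.
  destruct (Nat.eq_dec i n) as [->|Hne]; [apply Rmax_r|].
  eapply Rle_trans; [apply IH; lia | apply Rmax_l].
Qed.

Lemma proj_std_basis_norm d r U i :
  orthonormal d r (col U) -> (i < d)%nat ->
  norm2 d (proj d r U (std_basis i)) ^ 2 = dot r (row U i) (row U i).
Proof.
  intros HU Hi. destruct (proj_spec d r U (std_basis i)) as [[c Hc] Hort].
  set (p := proj d r U (std_basis i)) in *.
  assert (Hp : forall l, (l < d)%nat -> p l = lincomb r c (col U) l)
    by (intros l Hl; rewrite Hc by exact Hl; apply sumR_ext; intros; unfold col; ring).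
  assert (Hcoef : forall j, (j < r)%nat -> c j = U i j).
  { intros j Hj. specialize (Hort j Hj).
    rewrite dot_minus_r, (dot_comm d (col U j) (std_basis i)), dot_std_basis_l,
      (dot_ext d (col U j) p (col U j) (lincomb r c (col U))), dot_orthonormal_lincomb
      in Hort by auto.
    unfold col in Hort. lra. }
  unfold norm2. rewrite pow2_sqrt by apply dot_self_nonneg.
  rewrite (dot_ext d p p (lincomb r c (col U)) (lincomb r c (col U))), dot_lincomb_orthonormal
    by auto.
  apply sumR_ext. intros j Hj. unfold row. now rewrite Hcoef.
Qed.

Lemma sumR_row_norms d r U :
  orthonormal d r (col U) -> sumR d (fun i => dot r (row U i) (row U i)) = INR r.
Proof.
  intros HU. rewrite <- (sumR_orthonormal_norms d r (col U) HU).
  unfold dot. rewrite sumR_swap. reflexivity.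
Qed.

Section Coherence.
Variables (d r : nat) (U : mat) (mu0 : R).
Hypotheses (HU : orthonormal d r (col U)) (Hcoh : coherence d r U <= mu0) (Hr : (1 <= r)%nat).

Lemma ambient_dim_pos : (1 <= d)%nat.
Proof. pose proof (orthonormal_size_le d r (col U) HU). lia. Qed.

Lemma row_norm_le_coherence i :
  (i < d)%nat -> dot r (row U i) (row U i) <= mu0 * INR r / INR d.
Proof.
  intros Hi. assert (0 < INR r) by (apply lt_0_INR; lia).
  assert (0 < INR d) by (apply lt_0_INR; pose proof ambient_dim_pos; lia).
  pose proof (maxR_ge d (fun i => norm2 d (proj d r U (std_basis i)) ^ 2) i Hi) as Hmax.
  cbv beta in Hmax. rewrite proj_std_basis_norm in Hmax by auto.
  unfold coherence in Hcoh.
  apply Rmult_le_reg_l with (INR d / INR r); [apply Rdiv_lt_0_compat; lra|].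
  replace (INR d / INR r * (mu0 * INR r / INR d)) with mu0 by (field; lra).
  eapply Rle_trans; [|exact Hcoh].
  apply Rmult_le_compat_l; [left; apply Rdiv_lt_0_compat|]; lra.
Qed.

(* The row norms add up to [r], so the largest is at least [r/d]. *)
Lemma coherence_ge_1 : 1 <= mu0.
Proof.
  assert (0 < INR r) by (apply lt_0_INR; lia).
  assert (0 < INR d) by (apply lt_0_INR; pose proof ambient_dim_pos; lia).
  assert (Hsum : INR r <= INR d * (mu0 * INR r / INR d)).
  { rewrite <- sumR_const, <- (sumR_row_norms d r U HU) at 1.
    apply sumR_le. intros; now apply row_norm_le_coherence. }
  replace (INR d * (mu0 * INR r / INR d)) with (mu0 * INR r) in Hsum by (field; lra).
  nra.
Qed.

End Coherence.

Lemma residual_eq_0 Om k A z : residual Om k A z = 0 <->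
  forall j, (j < length Om)%nat -> sel Om z j = proj (length Om) k (rows_sel Om A) (sel Om z) j.
Proof.
  unfold residual, norm2. set (m := length Om).
  set (w := fun j => sel Om z j - proj m k (rows_sel Om A) (sel Om z) j). split.
  - intros H j Hj. apply sqrt_eq_0 in H; [|apply dot_self_nonneg].
    pose proof (dot_self_eq_0 m w H j Hj). unfold w in *. lra.
  - intros H. rewrite <- sqrt_0. f_equal.
    unfold dot. rewrite (sumR_ext m _ (fun _ => 0)), sumR_zero; [reflexivity|].
    intros j Hj. unfold w. rewrite <- H by exact Hj. ring.
Qed.

Lemma residual_eq_0_of_in_colspan d k A z Om :
  in_colspan d k A z -> (forall i, In i Om -> (i < d)%nat) -> residual Om k A z = 0.
Proof.
  intros [c Hc] HOm. apply residual_eq_0. intros j Hj. rewrite proj_id; [reflexivity| |exact Hj].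
  exists c. intros j' Hj'. apply Hc, HOm, nth_In, Hj'.
Qed.

Lemma eq_of_kernel_trivial d r U Om x y :
  Forall (fun i => (i < d)%nat) Om -> kernel_dim r U Om = 0%nat ->
  in_colspan d r U x -> in_colspan d r U y ->
  (forall i, In i Om -> x i = y i) -> forall i, (i < d)%nat -> x i = y i.
Proof.
  intros HOm H0 [a Ha] [b Hb] Hxy.
  assert (Hab : kernel_rows r U Om (fun j => a j - b j)).
  { intros i Hi. assert (Hid : (i < d)%nat) by (rewrite Forall_forall in HOm; auto).
    rewrite dot_minus_r. specialize (Hxy i Hi). rewrite Ha, Hb in Hxy by exact Hid.
    unfold dot, row. lra. }
  pose proof (dim_eq_0 r _ _ (kernel_rows_subspace r U Om) H0 Hab) as Hab0.
  intros i Hi. rewrite Ha, Hb by exact Hi. apply sumR_ext. intros j Hj.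
  specialize (Hab0 j Hj). cbv beta in Hab0. f_equal. lra.
Qed.

(* A zero residual puts [x_Omega] in the span of [Ut_Omega]; with a trivial kernel of
   U_Omega the corresponding combination of the columns of [Ut] is [x] itself. *)
Lemma residual_pos_of_kernel_trivial d r k U Ut x Om :
  Forall (fun i => (i < d)%nat) Om ->
  (forall j, (j < k)%nat -> in_colspan d r U (col Ut j)) -> in_colspan d r U x ->
  ~ in_colspan d k Ut x -> kernel_dim r U Om = 0%nat -> residual Om k Ut x > 0.
Proof.
  intros HOm HUt Hx Hnot H0.
  assert (Hge : 0 <= residual Om k Ut x) by apply sqrt_pos.
  destruct (Rle_lt_or_eq_dec _ _ Hge) as [Hpos|Hzero]; [exact Hpos|exfalso].
  pose proof (proj1 (residual_eq_0 Om k Ut x) (eq_sym Hzero)) as Hsel.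
  destruct (proj_spec (length Om) k (rows_sel Om Ut) (sel Om x)) as [[c Hc] _].
  apply Hnot. exists c. intros i Hi.
  transitivity (lincomb k c (col Ut) i);
    [|apply sumR_ext; intros; unfold col; ring].
  revert i Hi. apply (eq_of_kernel_trivial d r U Om); auto.
  - apply subspace_lincomb; [apply in_colspan_subspace | exact HUt].
  - intros i Hi. destruct (In_nth Om i O Hi) as [j [Hj <-]].
    specialize (Hsel j Hj). rewrite Hc in Hsel by exact Hj.
    unfold sel in Hsel. rewrite Hsel. apply sumR_ext. intros q _. unfold rows_sel, col. ring.
Qed.

Lemma prob_mono d m (E1 E2 : list nat -> Prop) :
  (forall Om, Forall (fun i => (i < d)%nat) Om -> E1 Om -> E2 Om) ->
  prob d m E1 <= prob d m E2.
Proof.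
  intros H. rewrite !prob_lists_sum. unfold Rdiv.
  apply Rmult_le_compat_r.
  - destruct (Rle_lt_or_eq_dec _ _ (pow_le (INR d) m (pos_INR d))) as [Hpos|<-].
    + left. now apply Rinv_0_lt_compat.
    + rewrite Rinv_0. lra.
  - apply lists_sum_le. intros Om HOm. unfold indicator.
    destruct excluded_middle_informative as [H1|]; [|destruct excluded_middle_informative; lra].
    destruct excluded_middle_informative; [lra|]. exfalso. auto.
Qed.

Lemma prob_kernel_trivial d r m U mu0 delta :
  orthonormal d r (col U) -> coherence d r U <= mu0 -> (1 <= r)%nat -> 0 < delta < 1 ->
  32 * INR r * mu0 * log_term r delta ^ 2 <= INR m ->
  1 - delta / 2 <= prob d m (fun Om => kernel_dim r U Om = 0%nat).
Proof.
  intros HU Hcoh Hr Hdelta Hm.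
  pose proof (ambient_dim_pos d r U HU Hr) as Hd.
  pose proof (coherence_ge_1 d r U mu0 HU Hcoh Hr) as Hmu0.
  assert (0 < INR r) by (apply lt_0_INR; lia).
  assert (0 < INR d) by (apply lt_0_INR; lia).
  set (K := mu0 * INR r / INR d).
  assert (HK : 0 < K) by (apply Rdiv_lt_0_compat; nra).
  assert (Hstall : forall Om s, (1 <= s)%nat -> kernel_dim r U Om = s ->
    sumR d (fun i => indicator (s <= kernel_dim r U (i :: Om))%nat)
    <= stall_prob mu0 r s * INR d).
  { intros Om s Hs HOm.
    eapply Rle_trans; [apply (kernel_dim_stall_bound d r U K Om s); auto|].
    - intros i Hi. now apply row_norm_le_coherence.
    - unfold stall_prob. rewrite Rmult_comm.
      apply Rle_trans with (INR d * (1 - INR s / (mu0 * INR r))).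
      + right. unfold K. field. split; lra.
      + apply Rmult_le_compat_l; [lra | apply Rmax_r]. }
  assert (Hfail : lists_sum d m (fun Om => indicator (1 <= kernel_dim r U (Om ++ nil))%nat)
                  <= INR d ^ m * (delta / 2)).
  { eapply Rle_trans.
    - apply (phases_bound d (kernel_dim r U) (stall_prob mu0 r) (phase_len mu0 r delta)
               (kernel_dim_cons_le r U) Hstall (fun s => Rmax_l _ _) r nil m).
      + apply dim_le.
      + now apply phases_length_le.
    - apply Rmult_le_compat_l; [apply pow_le; lra | now apply sum_stall_probs_le]. }
  rewrite prob_lists_sum.
  rewrite (lists_sum_ext d m _
    (fun Om => -1 * indicator (1 <= kernel_dim r U (Om ++ nil))%nat + 1)).
  - rewrite lists_sum_lin, lists_sum_const.
    assert (Hdm : 0 < INR d ^ m) by (apply pow_lt; lra).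
    apply Rmult_le_reg_r with (INR d ^ m); [exact Hdm|].
    unfold Rdiv. rewrite Rmult_assoc, Rinv_l by lra. lra.
  - intros Om. rewrite app_nil_r. unfold indicator.
    do 2 destruct excluded_middle_informative; lia || lra.
Qed.

Theorem corollary1 (d r k : nat) (U Ut : mat) (x : vec) (mu0 delta : R) :
  orthonormal_cols d r U ->
  coherence d r U <= mu0 ->
  orthonormal_cols d k Ut ->
  (forall j, (j < k)%nat -> in_colspan d r U (col Ut j)) ->
  in_colspan d r U x ->
  0 < delta < 1 ->
  (~ in_colspan d k Ut x ->
   forall m : nat,
     32 * INR r * mu0 * (ln (2 * INR r / delta)) ^ 2 <= INR m ->
     prob d m (fun Om => residual Om k Ut x > 0) >= 1 - 4 * delta)
  /\
  (in_colspan d k Ut x ->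
   forall Om : list nat,
     (forall i, In i Om -> (i < d)%nat) ->
     invertible k (gram (length Om) k (rows_sel Om Ut)) ->
     residual Om k Ut x = 0).
Proof.
  intros HU Hcoh _ HUt Hx Hdelta. split.
  - intros Hnot m Hm.
    assert (Hr : (1 <= r)%nat).
    { destruct r as [|r]; [|lia]. exfalso. apply Hnot.
      destruct Hx as [a Ha]. exists (fun _ => 0). intros i Hi.
      rewrite Ha by exact Hi. simpl.
      rewrite (sumR_ext k _ (fun _ => 0)), sumR_zero by (intros; ring). reflexivity. }
    pose proof (prob_kernel_trivial d r m U mu0 delta HU Hcoh Hr Hdelta Hm).
    assert (prob d m (fun Om => kernel_dim r U Om = 0%nat)
            <= prob d m (fun Om => residual Om k Ut x > 0)).
    { apply prob_mono. intros Om HOm.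
      now apply (residual_pos_of_kernel_trivial d r k U Ut x Om). }
    lra.
  (* The projection is defined without the Gram matrix. *)
  - intros Hin Om HOm _. now apply (residual_eq_0_of_in_colspan d).
Qed.
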